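(* Let $\mathcal{A}$ be an order--invariant oblivious streaming algorithm that, for any $\epsilon\in(0,1)$ and $\delta\in(0,1)$, uses $M(\epsilon,\delta)$ space and, on any fixed stream of at most $m$ updates, outputs a correct solution to the $(f,\epsilon)$--estimation problem with probability at least $1-\delta$, where $f$ has range contained in $\{0\}\cup[1,\alpha]$ for an integer $\alpha\ge2$. Then for any $\epsilon\in(0,1)$, any $\delta\in(0,1/10)$ and any $k\ge0$, there is a robust streaming algorithm for the $(f,\epsilon)$--estimation problem in the Bounded--Memory Adversary Model with $k$ bits of persistent memory that succeeds with probability at least $1-\delta$ and uses $M(\epsilon/3,1/10)\cdot O\!\left(2^k\cdot\frac{\log\alpha}{\epsilon}\cdot\log m+\log(1/\delta)\right)$ space.
   Context: Fix $n,m$ and $f:\mathbb{Z}^n\to\{0\}\cup[1,\alpha]$. For $x,y\ge0$, $y$ is a $(1+\epsilon)$--multiplicative approximation to $x$ if $x\le y<(1+\epsilon)x$; the $(f,\epsilon)$--estimation problem on $v\in\mathbb{Z}^n$ asks for such an approximation to $f(v)$. A stream of updates is a sequence $(i_j,\Delta_j)\in[n]\times\{-1,1\}$, accumulating into frequency vectors $v^{(j)}$ with $v^{(j)}_i=\sum_{j'\le j,\,i_{j'}=i}\Delta_{j'}$. An oblivious streaming algorithm is given $\epsilon$ and an upper bound $m$ on the stream length, processes $t\le m$ updates, and then outputs a solution to the $(f,\epsilon)$--estimation problem on $v^{(t)}$. Such an algorithm with random seed $\rho$ is order--invariant if for any two streams $S_1,S_2$ of length at most $m$ accumulating to the same frequency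 vector, and any seed $\rho$, its memory state after processing $S_1$ equals that after processing $S_2$. Bounded--Memory Adversary Model: a game of $m$ rounds between an Adversary and an Algorithm. The Adversary has a persistent memory of at most $k$ bits (read/write, retained across rounds), a read-only estimate memory containing the most recent estimate $y_{j-1}$ (empty in round 1), an unbounded working memory erased after each round, and fresh random bits each round that are discarded afterwards. In round $j$ the Adversary computes $(i_j,\Delta_j)$ as a function only of the fresh randomness, the persistent memory and the estimate memory (and may rewrite the persistent memory); the Algorithm receives the update and outputs $y_j$, which overwrites the estimate memory. The Algorithm succeeds if for every $j\in[m]$, $y_j$ is a $(1+\epsilon)$--multiplicative approximation to $f(v^{(j)})$. *)

From HB Require Import structures.
From mathcomp Require Import all_boot all_order all_algebra.
From mathcomp Require Import all_classical all_reals all_analysis.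

Import Order.TTheory GRing.Theory Num.Theory.
Local Open Scope ring_scope.

(* An update (i, Delta) in [n] x {-1,+1}; the boolean encodes the sign. *)
Notation update n := ('I_n * bool)%type.

Definition sgn (b : bool) : int := if b then 1 else -1.

Definition freq (n : nat) (s : seq (update n)) : {ffun 'I_n -> int} :=
  [ffun i => \sum_(u <- s | u.1 == i) sgn u.2].
Arguments freq {n} s.

Definition approx (R : realType) (eps x y : R) : bool :=
  (x <= y) && (y < (1 + eps) * x).
Arguments approx {R} eps x y.

Definition is_dist (R : realType) (T : finType) (p : T -> R) : Prop :=
  (forall t, 0 <= p t) /\ \sum_(t : T) p t = 1.
Arguments is_dist {R T} p.

(* A randomized streaming algorithm: a random seed drawn from [seed_dist],
   a memory state (the space used is the number of bits of the state type),
   deterministic given the seed. *)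
Record salg (R : realType) (n : nat) := SAlg {
  seed : finType;
  state : finType;
  seed_dist : seed -> R;
  init : seed -> state;
  step : seed -> state -> update n -> state;
  output : seed -> state -> R }.

Arguments SAlg {R n}.
Arguments seed {R n}.
Arguments state {R n}.
Arguments seed_dist {R n}.
Arguments init {R n}.
Arguments step {R n}.
Arguments output {R n}.

Definition run (R : realType) (n : nat) (A : salg R n) (r : seed A)
  (s : seq (update n)) : state A := foldl (step A r) (init A r) s.
Arguments run {R n} A r s.

Definition uses_space (R : realType) (n : nat) (A : salg R n) (S : nat) : Prop :=
  (#|{: state A}| <= 2 ^ S)%N.
Arguments uses_space {R n} A S.

Definition prob (R : realType) (n : nat) (A : salg R n) (P : pred (seed A)) : R :=
  \sum_(r | P r) seed_dist A r.
Arguments prob {R n} A P.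

Definition order_invariant (R : realType) (n m : nat) (A : salg R n) : Prop :=
  forall (r : seed A) (s1 s2 : seq (update n)),
    (size s1 <= m)%N -> (size s2 <= m)%N -> freq s1 = freq s2 ->
    run A r s1 = run A r s2.
Arguments order_invariant {R n} m A.

Definition oblivious_correct (R : realType) (n m : nat)
  (f : {ffun 'I_n -> int} -> R) (eps delta : R) (A : salg R n) : Prop :=
  forall s : seq (update n), (size s <= m)%N ->
    1 - delta <= prob A (fun r => approx eps (f (freq s)) (output A r (run A r s))).
Arguments oblivious_correct {R n} m f eps delta A.

(* In each round it
   sees only its persistent memory and the estimate memory (None in round 1),
   uses fresh randomness, and outputs an update and new persistent memory:
   this is a (time-invariant) Markov kernel. *)
Record adversary (R : realType) (n k : nat) := Adv {
  mem0 : k.-tuple bool;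
  adv_step : k.-tuple bool -> option R -> (update n * k.-tuple bool)%type -> R }.

Arguments Adv {R n k}.
Arguments mem0 {R n k}.
Arguments adv_step {R n k}.

Definition valid_adversary (R : realType) (n k : nat) (E : adversary R n k) : Prop :=
  forall (mem : k.-tuple bool) (est : option R), is_dist (adv_step E mem est).
Arguments valid_adversary {R n k} E.

Fixpoint game_succ (R : realType) (n k : nat) (A : salg R n)
  (f : {ffun 'I_n -> int} -> R) (eps : R) (E : adversary R n k) (r : seed A)
  (rounds : nat) (hist : seq (update n)) (st : state A)
  (mem : k.-tuple bool) (est : option R) : R :=
  match rounds with
  | 0 => 1
  | rounds'.+1 =>
      \sum_(o : (update n * k.-tuple bool)%type)
        adv_step E mem est o *
        ((approx eps (f (freq (rcons hist o.1))) (output A r (step A r st o.1)))%:R *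
         game_succ R n k A f eps E r rounds' (rcons hist o.1) (step A r st o.1) o.2
                   (Some (output A r (step A r st o.1))))
  end.
Arguments game_succ {R n k} A f eps E r rounds hist st mem est.

Definition robust_success (R : realType) (n k m : nat) (A : salg R n)
  (f : {ffun 'I_n -> int} -> R) (eps : R) (E : adversary R n k) : R :=
  \sum_(r : seed A) seed_dist A r * game_succ A f eps E r m [::] (init A r) (mem0 E) None.
Arguments robust_success {R n k} m A f eps E.

Definition robust_correct (R : realType) (n m k : nat)
  (f : {ffun 'I_n -> int} -> R) (eps delta : R) (A : salg R n) : Prop :=
  forall E : adversary R n k, valid_adversary E ->
    1 - delta <= robust_success m A f eps E.
Arguments robust_correct {R n} m k f eps delta A.

From Pilot Require Import Defs.
From HB Require Import structures.
From mathcomp Require Import all_boot all_order all_algebra.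
From mathcomp Require Import all_classical all_reals all_analysis.
From mathcomp Require Import lra zify ring.
Import Order.TTheory GRing.Theory Num.Theory.
Local Open Scope ring_scope.
Set Implicit Arguments.
Unset Strict Implicit.
Unset Printing Implicit Defensive.

(* Run [T] independent copies of the oblivious algorithm with accuracy [eps / 3] and failure
   probability [1 / 10], and output the median of their estimates rounded up to the grid of
   powers of [1 + eps / 3]: whenever a majority of the copies is correct, this is a
   [(1 + eps)]-approximation.  The adversary only ever sees its [k] memory bits and a grid
   point, so its randomness can be sampled in advance as a table holding one move for every
   such view and every number of earlier visits to it.  For a fixed table the stream after
   any round is, up to order, determined by these visit counts, and by order invariance so
   is the state of every copy.  A Chernoff bound [(13/20) ^+ T] for each of the at most
   [(m + 1) ^ (2 ^ k * (L + 2))] count vectors and a union bound give the robust guarantee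
   with [T = O(2 ^ k * L * log m + log (1 / delta))] and [L = O(log alpha / eps)]. *)

Section Majority.
Variable I : finType.

Lemma majorities_meet (P Q : pred I) :
  (#|I| < 2 * #|P|)%N -> (#|I| < 2 * #|Q|)%N -> exists2 j, P j & Q j.
Proof.
move=> hP hQ; case: (pickP [predI P & Q]) => [j /andP[]|none]; first by exists j.
have hU : (#|[predU P & Q]| <= #|I|)%N by exact: max_card.
by have := cardUI P Q; rewrite (eq_card0 none); lia.
Qed.

Lemma majority_minority_diff (P Q : pred I) :
  (#|I| < 2 * #|P|)%N -> ~~ (#|I| < 2 * #|Q|)%N -> exists2 j, P j & ~~ Q j.
Proof.
move=> hP hQ; case: (pickP [predD P & Q]) => [j /andP[]|none]; first by exists j.
suff: (#|P| <= #|Q|)%N by lia.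
apply: subset_leq_card; apply/fintype.subsetP => j Pj; apply: contraT => Qj.
by move: (none j) Pj; rewrite /= Qj /= => ->.
Qed.

End Majority.

Section GridMedian.
Variables (R : realType) (I : finType) (e : R) (L : nat).

Definition majority_le (o : I -> R) (y : R) : bool :=
  (#|I| < 2 * #|[pred j | (o j <= y)%R]|)%N.

(* [find] returns [L] when no grid point below [(1 + e) ^+ L] is a majority bound. *)
Definition grid_median (o : I -> R) : nat :=
  find (fun i => majority_le o ((1 + e) ^+ i)) (iota 0 L).

Lemma grid_median_le o : (grid_median o <= L)%N.
Proof. by rewrite -[X in (_ <= X)%N](size_iota 0) find_size. Qed.

Lemma grid_median_approx (eps x : R) (o : I -> R) :
  0 < eps -> 0 <= e -> (1 + e) ^+ 2 <= 1 + eps ->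
  1 <= x -> (1 + e) * x <= (1 + e) ^+ L ->
  (#|I| < 2 * #|[pred j | Defs.approx e x (o j)]|)%N ->
  Defs.approx eps x ((1 + e) ^+ grid_median o).
Proof.
move=> eps0 e0 he x1 xL good.
have below : majority_le o ((1 + e) ^+ grid_median o).
  have := grid_median_le o; rewrite leq_eqVlt => /orP[/eqP->|iL].
    apply: leq_trans good _; rewrite leq_mul2l; apply/orP; right.
    apply: subset_leq_card; apply/fintype.subsetP => j; rewrite !inE => /andP[_ h].
    exact: ltW (lt_le_trans h xL).
  have := iL; rewrite -[X in (_ < X)%N](size_iota 0) -has_find => /(nth_find 0).
  by rewrite nth_iota.
have above i : grid_median o = i.+1 -> ~~ majority_le o ((1 + e) ^+ i).
  move=> def_i; have := grid_median_le o; rewrite def_i => iL.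
  have : (i < grid_median o)%N by rewrite def_i.
  by move=> /(before_find 0); rewrite nth_iota // add0n => ->.
have [j /andP[xj _] oj] := majorities_meet good below.
rewrite /Defs.approx (le_trans xj oj) /=.
case def_i: (grid_median o) above => [|i] above; first by rewrite expr0; nra.
have [j' /andP[_ oj'x] oj'] := majority_minority_diff good (above i erefl).
rewrite inE -ltNge in oj'.
have rho0 : 0 < 1 + e by lra.
rewrite exprS; apply: (lt_le_trans (y := (1 + e) * ((1 + e) * x))).
  by rewrite ltr_pM2l //; apply: lt_trans oj'x.
by rewrite mulrA -expr2; apply: ler_wpM2r => //; lra.
Qed.

End GridMedian.

Section ProductKernel.
Variables (R : numDomainType) (I S : finType) (K : I -> S -> R).

Definition prod_kernel (w : {ffun I -> S}) : R := \prod_i K i (w i).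

Lemma prod_kernel_ge0 w : (forall i s, 0 <= K i s) -> 0 <= prod_kernel w.
Proof. by move=> K0; apply: prodr_ge0. Qed.

Lemma sum_prod_kernelM (G : I -> S -> R) :
  \sum_w prod_kernel w * \prod_i G i (w i) = \prod_i \sum_s K i s * G i s.
Proof. by rewrite bigA_distr_bigA; apply: eq_bigr => w _; rewrite big_split. Qed.

Lemma sum_prod_kernel : (forall i, \sum_s K i s = 1) -> \sum_w prod_kernel w = 1.
Proof. by move=> K1; rewrite /prod_kernel -bigA_distr_bigA big1. Qed.

Lemma sum_prod_kernel_at (i0 : I) (s0 : S) (F : {ffun I -> S} -> R) :
  \sum_s K i0 s = 1 ->
  (forall w w' : {ffun I -> S}, (forall i, i != i0 -> w i = w' i) -> F w = F w') ->
  \sum_(w : {ffun I -> S} | w i0 == s0) prod_kernel w * F w =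
    K i0 s0 * \sum_w prod_kernel w * F w.
Proof.
move=> K1 F_local.
pose G s := \sum_(w : {ffun I -> S} | w i0 == s) (\prod_(i | i != i0) K i (w i)) * F w.
have split_at s : \sum_(w : {ffun I -> S} | w i0 == s) prod_kernel w * F w = K i0 s * G s.
  rewrite mulr_sumr; apply: eq_bigr => w /eqP wi0.
  by rewrite /prod_kernel (bigD1 i0) //= wi0 mulrA.
have G_const s : G s = G s0.
  pose upd (w : {ffun I -> S}) s' := [ffun i => if i == i0 then s' else w i].
  have updE w s' i : i != i0 -> upd w s' i = w i by rewrite ffunE => /negbTE ->.
  rewrite /G (reindex_onto (upd ^~ s) (upd ^~ s0)) /=; last first.
    by move=> w /eqP wi0; apply/ffunP => i; rewrite !ffunE; case: eqP => // ->.
  apply: eq_big.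
    move=> w; rewrite /upd ffunE !eqxx /=; apply/eqP/eqP => [<-|wi0].
      by rewrite ffunE eqxx.
    by apply/ffunP => i; rewrite !ffunE; case: eqP => [->|].
  move=> w _; congr (_ * _); first by apply: eq_bigr => i /updE ->.
  by apply: F_local => i /updE.
rewrite split_at (partition_big (fun w : {ffun I -> S} => w i0) predT) //=.
under eq_bigr => s _ do rewrite split_at G_const.
by rewrite -mulr_suml K1 mul1r.
Qed.

End ProductKernel.

(* Exponential Markov inequality: without a majority of [g]-successes at least half of the
   factors of [\prod_i h (w i)] equal [4], so it is at least [2 ^+ #|I|], while its
   expectation is [(1 + 3 * P[~~ g]) ^+ #|I| <= (13/10) ^+ #|I|]. *)
Lemma majority_fail_le (R : realType) (I S : finType) (p : S -> R) (g : pred S) :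
  is_dist p -> \sum_(s | ~~ g s) p s <= 1 / 10 ->
  \sum_(w : {ffun I -> S}) prod_kernel (fun _ => p) w *
    (~~ (#|I| < 2 * #|[pred i | g (w i)]|)%N)%:R <= (13 / 20) ^+ #|I|.
Proof.
move=> [p0 p1] pbad.
pose h s : R := if g s then 1 else 4.
have h0 s : 0 <= h s by rewrite /h; case: (g s); lra.
have h_weight (w : {ffun I -> S}) :
    (~~ (#|I| < 2 * #|[pred i | g (w i)]|)%N)%:R <= (\prod_i h (w i)) / 2 ^+ #|I|.
  case: ltnP => /= few; first by rewrite divr_ge0 ?exprn_ge0 ?prodr_ge0.
  rewrite ler_pdivlMr ?exprn_gt0 // mul1r.
  have -> : \prod_i h (w i) = 2 ^+ (2 * #|[pred i | ~~ g (w i)]|).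
    rewrite exprM (_ : 2 ^+ 2 = 4); last by rewrite expr2; lra.
    rewrite -prodr_const [RHS]big_mkcond; apply: eq_bigr => i _.
    by rewrite inE /h; case: (g (w i)).
  apply: ler_weXn2l; first lra.
  have : (#|[pred i | g (w i)]| + #|[pred i | ~~ g (w i)]|)%N = #|I|.
    rewrite -(cardC [pred i | g (w i)]).
    by congr (_ + _)%N; apply: eq_card => i; rewrite !inE.
  by move: few; move: #|I| #|[pred i | g (w i)]| #|[pred i | ~~ g (w i)]| => N a b; lia.
have mean : \sum_s p s * h s <= 13 / 10.
  suff -> : \sum_s p s * h s = \sum_s p s + 3 * \sum_(s | ~~ g s) p s by rewrite p1; lra.
  rewrite mulr_sumr [X in _ + X]big_mkcond -big_split /=; apply: eq_bigr => s _.
  by rewrite /h; case: (g s) => /=; lra.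
apply: (le_trans (y := \sum_w prod_kernel (fun _ => p) w * ((\prod_i h (w i)) / 2 ^+ #|I|))).
  by apply: ler_sum => w _; apply: ler_wpM2l => //; apply: prod_kernel_ge0.
under eq_bigr => w _ do rewrite mulrA.
rewrite -mulr_suml (sum_prod_kernelM _ (fun=> h)) ler_pdivrMr ?exprn_gt0 // -exprMn.
have -> : (13 / 20 * 2 : R) = 13 / 10 by lra.
have -> : (13 / 10 : R) ^+ #|I| = \prod_(i : I) (13 / 10) by rewrite prodr_const.
apply: ler_prod => i _.
by rewrite mean sumr_ge0 // => s _; apply: mulr_ge0.
Qed.

Section MedianAlgorithm.
Variables (R : realType) (n : nat) (A : salg R n) (T L : nat) (e : R).

Definition median_index (rr : {ffun 'I_T -> seed A}) (st : {ffun 'I_T -> state A}) :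
    'I_L.+1 :=
  inord (grid_median e L (fun j => output A (rr j) (st j))).

Definition median_alg : salg R n :=
  SAlg {ffun 'I_T -> seed A} {ffun 'I_T -> state A}
    (prod_kernel (fun _ => seed_dist A))
    (fun rr => [ffun j => init A (rr j)])
    (fun rr st u => [ffun j => step A (rr j) (st j) u])
    (fun rr st => (1 + e) ^+ median_index rr st).

Lemma median_alg_dist : is_dist (seed_dist A) -> is_dist (seed_dist median_alg).
Proof.
move=> [p0 p1]; split => [rr|]; first exact: prod_kernel_ge0.
exact: sum_prod_kernel.
Qed.

Lemma median_alg_space M : uses_space A M -> uses_space median_alg (M * T).
Proof.
rewrite /uses_space /= card_ffun card_ord expnM => hM.
by have [->|T0] := posnP T; rewrite ?expn0 ?leq_exp2r.
Qed.

Lemma run_median_alg rr s : run median_alg rr s = [ffun j => run A (rr j) s].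
Proof.
rewrite /run /=; elim/last_ind: s => [|s u IH]; first by [].
by rewrite !foldl_rcons IH; apply/ffunP => j; rewrite !ffunE foldl_rcons.
Qed.

Definition majority_correct (f : {ffun 'I_n -> int} -> R) (rr : {ffun 'I_T -> seed A})
    (s : seq (update n)) : bool :=
  (T < 2 * #|[pred j | Defs.approx e (f (freq s)) (output A (rr j) (run A (rr j) s))]|)%N.

Lemma median_alg_correct f (eps : R) rr s :
  0 < eps -> 0 <= e -> (1 + e) ^+ 2 <= 1 + eps ->
  1 <= f (freq s) -> (1 + e) * f (freq s) <= (1 + e) ^+ L ->
  majority_correct f rr s ->
  Defs.approx eps (f (freq s)) (output median_alg rr (run median_alg rr s)).
Proof.
move=> eps0 e0 he f1 fL maj; rewrite /= /median_index inordK ?ltnS ?grid_median_le //.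
apply: grid_median_approx => //; rewrite card_ord; move: maj; rewrite /majority_correct.
by congr (_ < _ * _)%N; apply: eq_card => j; rewrite !inE run_median_alg ffunE.
Qed.

End MedianAlgorithm.

Lemma oblivious_correct_ge1 (R : realType) (n m : nat) (A : salg R n)
    (f : {ffun 'I_n -> int} -> R) (eps delta : R) s :
  delta < 1 -> (f (freq s) = 0 \/ 1 <= f (freq s)) -> (size s <= m)%N ->
  oblivious_correct m f eps delta A -> 1 <= f (freq s).
Proof.
move=> delta1 [f0|//] sm /(_ s sm); rewrite /prob f0 big_pred0 => [|r]; first lra.
by apply/negbTE/negP => /andP[]; lra.
Qed.

Definition adv_view (k L : nat) : finType := (k.-tuple bool * option 'I_L.+1)%type.
Notation adv_move n k := (update n * k.-tuple bool)%type.

Section TableCoupling.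
Variables (R : realType) (n k m : nat) (A : salg R n) (T L : nat) (e eps : R).
Variables (f : {ffun 'I_n -> int} -> R) (E : adversary R n k).
Hypothesis E_valid : valid_adversary E.

Local Notation view := (adv_view k L).
Local Notation table := {ffun adv_view k L * 'I_m.+1 -> adv_move n k}.
Local Notation B := (median_alg A T L e).

Definition grid_point (i : 'I_L.+1) : R := (1 + e) ^+ i.

Definition slot_kernel (x : view * 'I_m.+1) : adv_move n k -> R :=
  adv_step E x.1.1 (omap grid_point x.1.2).

Definition table_dist : table -> R := prod_kernel slot_kernel.

Definition table_move (w : table) (c : view) (i : nat) : adv_move n k := w (c, inord i).

Definition visit (t : view -> nat) (c : view) : view -> nat :=
  fun c' => (t c' + (c' == c))%N.

Fixpoint table_play rr (w : table) (j : nat) (t : view -> nat) (hist : seq (update n))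
    (st : state B) (c : view) : bool :=
  if j is j'.+1 then
    let o := table_move w c (t c) in
    let st' := step B rr st o.1 in
    Defs.approx eps (f (freq (rcons hist o.1))) (output B rr st') &&
    table_play rr w j' (visit t c) (rcons hist o.1) st' (o.2, Some (median_index L e rr st'))
  else true.

Lemma table_play_local rr j t hist st c (w w' : table) :
  (forall c' (i : 'I_m.+1), (t c' <= i)%N -> w (c', i) = w' (c', i)) ->
  (forall c', t c' + j <= m)%N ->
  table_play rr w j t hist st c = table_play rr w' j t hist st c.
Proof.
elim: j t hist st c => [//|j IH] t hist st c ww' tj /=.
have -> : table_move w c (t c) = table_move w' c (t c).
  by apply: ww'; rewrite inordK //; have := tj c; lia.
congr (_ && _); apply: IH => [c' i|c']; rewrite /visit.
  by move=> ti; apply: ww'; lia.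
by have := tj c'; case: (c' == c) => /=; lia.
Qed.

Lemma sum_slot_kernel x : \sum_o slot_kernel x o = 1.
Proof. exact: (E_valid x.1.1 (omap grid_point x.1.2)).2. Qed.

Lemma slot_kernel_ge0 x o : 0 <= slot_kernel x o.
Proof. exact: (E_valid x.1.1 (omap grid_point x.1.2)).1. Qed.

(* The adversary only ever sees its memory and a grid point, so drawing its move afresh in
   each round has the same law as reading it off a table, sampled in advance, that has an
   independent entry for every view and every number of previous visits to that view. *)
Lemma game_succ_table rr j t hist st c :
  (forall c', t c' + j <= m)%N ->
  game_succ B f eps E rr j hist st c.1 (omap grid_point c.2)
    = \sum_w table_dist w * (table_play rr w j t hist st c)%:R.
Proof.
elim: j t hist st c => [|j IH] t hist st c tj.
  rewrite /= (eq_bigr table_dist) ?sum_prod_kernel // => [x|w _].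
    exact: sum_slot_kernel.
  exact: mulr1.
have tj' c' : (visit t c c' + j <= m)%N.
  by have := tj c'; rewrite /visit; case: (c' == c) => /=; lia.
rewrite /= (partition_big (fun w : table => w (c, inord (t c))) predT) //=.
apply: eq_bigr => o _.
rewrite (IH (visit t c) _ _ (o.2, Some (median_index L e rr (step B rr st o.1)))) //.
under [RHS]eq_bigr => w /eqP wo do rewrite [table_move w c (t c)]/table_move wo -mulnb natrM.
rewrite sum_prod_kernel_at ?sum_slot_kernel //; last first.
  move=> w w' ww'; congr (_ * (nat_of_bool _)%:R); apply: table_play_local tj' => c' i ti.
  apply: ww'; apply: contraTneq ti => -[-> ->]; rewrite /visit eqxx inordK; first lia.
  by have := tj c; lia.
congr (_ * _); rewrite mulr_sumr; apply: eq_bigr => w _; exact: mulrCA.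
Qed.

End TableCoupling.

Section TableStream.
Variables (n k m L : nat).
Local Notation view := (adv_view k L).
Local Notation table := {ffun adv_view k L * 'I_m.+1 -> adv_move n k}.

(* Up to order, the stream played once every view [c] has been visited [t c] times. *)
Definition table_stream (w : table) (t : view -> nat) : seq (update n) :=
  flatten [seq [seq (table_move w c i).1 | i <- iota 0 (t c)] | c <- enum view].

Lemma count_table_stream w t a :
  count a (table_stream w t) =
    (\sum_(c <- enum view) count a [seq (table_move w c i).1 | i <- iota 0 (t c)])%N.
Proof. by rewrite count_flatten -map_comp sumnE big_map. Qed.

Lemma size_table_stream w t : size (table_stream w t) = (\sum_(c <- enum view) t c)%N.
Proof.
rewrite -count_predT count_table_stream; apply: eq_bigr => c _.
by rewrite count_predT size_map size_iota.
Qed.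

Lemma sum_visit (t : view -> nat) c :
  (\sum_(c' <- enum view) visit t c c' = (\sum_(c' <- enum view) t c') + 1)%N.
Proof.
rewrite big_split /=; congr (_ + _)%N.
by rewrite (bigD1_seq c) ?mem_enum ?enum_uniq //= eqxx big1 // => c' /negbTE ->.
Qed.

Lemma perm_table_stream_visit w t c :
  perm_eq (rcons (table_stream w t) (table_move w c (t c)).1) (table_stream w (visit t c)).
Proof.
apply/permP => a; rewrite -cats1 count_cat /= addn0 !count_table_stream.
pose new c' := ((c' == c) * a (table_move w c (t c)).1)%N.
have visit_count c' : count a [seq (table_move w c' i).1 | i <- iota 0 (visit t c c')] =
    (count a [seq (table_move w c' i).1 | i <- iota 0 (t c')] + new c')%N.
  rewrite /new /visit; case: eqP => [->|_]; last by rewrite !addn0.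
  by rewrite iotaD map_cat count_cat /= !addn0 mul1n.
rewrite (eq_bigr _ (fun c' _ => visit_count c')) big_split /=; congr (_ + _)%N.
rewrite (bigD1_seq c) ?mem_enum ?enum_uniq //= big1 ?addn0 /new ?eqxx ?mul1n //.
by move=> c' /negbTE ->.
Qed.

End TableStream.

Lemma freq_perm (n : nat) (s1 s2 : seq (update n)) : perm_eq s1 s2 -> freq s1 = freq s2.
Proof. by move=> s12; apply/ffunP => i; rewrite !ffunE (perm_big _ s12). Qed.

Lemma dist_indicatorC (R : realType) (S : finType) (p : S -> R) (P : pred S) :
  \sum_s p s = 1 -> \sum_s p s * (P s)%:R = 1 - \sum_s p s * (~~ P s)%:R.
Proof.
move=> p1; rewrite -[X in _ = X - _]p1 -sumrB; apply: eq_bigr => s _.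
by case: (P s); rewrite /= ?mulr1 ?mulr0 ?subr0 ?subrr.
Qed.

Section TableGood.
Variables (R : realType) (n k m : nat) (A : salg R n) (T L : nat) (e eps : R).
Variable f : {ffun 'I_n -> int} -> R.
Hypothesis A_inv : order_invariant m A.
Hypothesis f_ge1 : forall s, (size s <= m)%N -> 1 <= f (freq s).
Hypothesis f_grid : forall s, (size s <= m)%N -> (1 + e) * f (freq s) <= (1 + e) ^+ L.
Hypotheses (eps0 : 0 < eps) (e0 : 0 <= e) (e_eps : (1 + e) ^+ 2 <= 1 + eps).

Local Notation view := (adv_view k L).
Local Notation table := {ffun adv_view k L * 'I_m.+1 -> adv_move n k}.
Local Notation B := (median_alg A T L e).

(* The streams [table_stream w tt] depend on the table only, so oblivious correctness
   applies to each of them; this turns the adaptive game into a union bound. *)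
Definition table_good (rr : seed B) (w : table) : bool :=
  [forall tt : {ffun view -> 'I_m.+1}, ((\sum_(c <- enum view) tt c)%N <= m)%N ==>
     majority_correct e f rr (table_stream w (fun c => tt c))].

Lemma table_good_stream rr w (t : view -> nat) :
  table_good rr w -> (\sum_(c <- enum view) t c <= m)%N ->
  majority_correct e f rr (table_stream w t).
Proof.
move=> /forallP/(_ [ffun c => inord (t c)]) good tm.
have ttE c : ([ffun c => inord (t c)] c : 'I_m.+1) = t c :> nat.
  rewrite ffunE inordK // ltnS; apply: leq_trans tm.
  by rewrite (bigD1_seq c) ?mem_enum ?enum_uniq //= leq_addr.
move: good; rewrite (eq_bigr t) => [|c _]; last exact: ttE.
rewrite tm /= /table_stream; congr majority_correct; congr flatten.
by apply: eq_map => c; rewrite ttE.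
Qed.

Lemma table_play_good rr w j t hist st c :
  table_good rr w -> ((\sum_(c' <- enum view) t c') + j <= m)%N ->
  perm_eq hist (table_stream w t) -> st = run B rr hist ->
  table_play eps f rr w j t hist st c.
Proof.
move=> good; elim: j t hist st c => [//|j IH] t hist st c tj hist_t st_hist /=.
set o := table_move w c (t c).
have hist_t' : perm_eq (rcons hist o.1) (table_stream w (visit t c)).
  by apply: perm_trans (perm_table_stream_visit w t c); rewrite -!cats1 perm_cat2r.
have st_hist' : [ffun i => step A (rr i) (st i) o.1] = run B rr (rcons hist o.1).
  by apply/ffunP => i; rewrite st_hist !run_median_alg !ffunE /run foldl_rcons.
have size_t' : (size (table_stream w (visit t c)) <= m)%N.
  by rewrite size_table_stream sum_visit; lia.
apply/andP; split; last by apply: IH => //; rewrite sum_visit; lia.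
rewrite st_hist' (freq_perm hist_t').
have -> : run B rr (rcons hist o.1) = run B rr (table_stream w (visit t c)).
  rewrite !run_median_alg; apply/ffunP => i; rewrite !ffunE; apply: A_inv => //.
    by rewrite (perm_size hist_t').
  exact: freq_perm.
apply: median_alg_correct => //; [exact: f_ge1 | exact: f_grid |].
by apply: table_good_stream => //; rewrite sum_visit; lia.
Qed.

End TableGood.

Section UnionBound.
Variables (R : realType) (n k m : nat) (A : salg R n) (T L : nat) (e eps : R).
Variables (f : {ffun 'I_n -> int} -> R) (E : adversary R n k).
Hypothesis A_dist : is_dist (seed_dist A).
Hypothesis A_inv : order_invariant m A.
Hypothesis A_correct : oblivious_correct m f e (1 / 10) A.
Hypothesis f_ge1 : forall s, (size s <= m)%N -> 1 <= f (freq s).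
Hypothesis f_grid : forall s, (size s <= m)%N -> (1 + e) * f (freq s) <= (1 + e) ^+ L.
Hypotheses (eps0 : 0 < eps) (e0 : 0 <= e) (e_eps : (1 + e) ^+ 2 <= 1 + eps).
Hypothesis E_valid : valid_adversary E.

Local Notation view := (adv_view k L).
Local Notation table := {ffun adv_view k L * 'I_m.+1 -> adv_move n k}.
Local Notation B := (median_alg A T L e).

Lemma robust_success_ge (G : seed B -> table -> bool) (beta : R) :
  (forall rr w, G rr w ->
     table_play eps f rr w m (fun=> 0%N) [::] (init B rr) (mem0 E, None)) ->
  (forall w, \sum_rr seed_dist B rr * (~~ G rr w)%:R <= beta) ->
  1 - beta <= robust_success m B f eps E.
Proof.
move=> G_play G_fail; have [B0 B1] := median_alg_dist T L e A_dist.
have w0 (w : table) : 0 <= table_dist e E w.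
  by apply: prod_kernel_ge0 => x o; apply: slot_kernel_ge0.
rewrite /robust_success; under eq_bigr => rr _ do rewrite
  (game_succ_table (m := m) (t := fun=> 0%N) eps f E_valid rr [::] (init B rr) (mem0 E, None)) //.
have w1 : \sum_(w : table) table_dist e E w = 1.
  by apply: sum_prod_kernel => x; apply: sum_slot_kernel.
apply: (le_trans (y := \sum_(w : table) table_dist e E w * (1 - beta))).
  by rewrite -mulr_suml w1 mul1r.
apply: (le_trans (y := \sum_w table_dist e E w * \sum_rr seed_dist B rr * (G rr w)%:R)).
  apply: ler_sum => w _; apply: ler_wpM2l => //.
  by rewrite dist_indicatorC //; have := G_fail w; lra.
under [leLHS]eq_bigr => w _ do rewrite mulr_sumr.
rewrite exchange_big /=; apply: ler_sum => rr _; rewrite mulr_sumr; apply: ler_sum => w _.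
rewrite mulrCA; apply: (ler_wpM2l (B0 rr)); apply: (ler_wpM2l (w0 w)).
by case: (boolP (G rr w)) => [/G_play ->|].
Qed.

Lemma majority_correct_fail_le s : (size s <= m)%N ->
  \sum_rr seed_dist B rr * (~~ majority_correct e f rr s)%:R <= (13 / 20) ^+ T.
Proof.
move=> sm; pose good r := Defs.approx e (f (freq s)) (output A r (run A r s)).
have := majority_fail_le 'I_T (g := good) A_dist; rewrite !card_ord; apply.
have := A_correct sm; have := A_dist.2.
by rewrite (bigID good) /= /prob; lra.
Qed.

Lemma table_good_fail_le (w : table) :
  \sum_rr seed_dist B rr * (~~ table_good f rr w)%:R <=
    (m.+1 ^ #|view|)%:R * (13 / 20) ^+ T.
Proof.
have [B0 _] := median_alg_dist T L e A_dist.
pose bad (rr : seed B) (tt : {ffun view -> 'I_m.+1}) :=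
  ((\sum_(c <- enum view) tt c)%N <= m)%N &&
  ~~ majority_correct e f rr (table_stream w (fun c => tt c)).
apply: (le_trans
  (y := \sum_(tt : {ffun view -> 'I_m.+1}) \sum_rr seed_dist B rr * (bad rr tt)%:R)).
  rewrite exchange_big /=; apply: ler_sum => rr _; rewrite -mulr_sumr.
  apply: (ler_wpM2l (B0 rr)).
  case: (boolP (table_good f rr w)) => [_|/forallPn[tt]]; first by rewrite sumr_ge0.
  rewrite negb_imply => bad_tt; rewrite (bigD1 tt) //= /bad bad_tt lerDl.
  by apply: sumr_ge0.
have -> : (m.+1 ^ #|view|)%N = #|{ffun view -> 'I_m.+1}| by rewrite card_ffun card_ord.
rewrite mulrC mulr_natr -sumr_const; apply: ler_sum => tt _.
case: (leqP (\sum_(c <- enum view) tt c) m) => tm.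
  by rewrite /bad tm; apply: majority_correct_fail_le; rewrite size_table_stream.
by rewrite big1 ?exprn_ge0 // => rr _; rewrite /bad leqNgt tm /= mulr0.
Qed.

Lemma median_alg_robust_success :
  1 - (m.+1 ^ #|view|)%:R * (13 / 20) ^+ T <= robust_success m B f eps E.
Proof.
apply: (robust_success_ge (G := table_good f)) => [rr w good|]; last exact: table_good_fail_le.
apply: (table_play_good A_inv f_ge1 f_grid eps0 e0 e_eps _ good) => //; first by rewrite big1.
by apply/permP => a; rewrite count_table_stream big1.
Qed.

Lemma median_alg_robust_success1 : m = 1%N ->
  1 - (13 / 20) ^+ T <= robust_success m B f eps E.
Proof.
move=> m1; apply: (robust_success_ge
  (G := fun rr w => majority_correct e f rr [:: (table_move w (mem0 E, None) 0).1])).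
  move=> rr w maj.
  suff play j : (j <= m)%N ->
      table_play eps f rr w j (fun=> 0%N) [::] (init B rr) (mem0 E, None).
    exact: play.
  case: j => [|[|j]] jm; [by [] | | by exfalso; lia].
  apply/andP; split; last by [].
  have s1 : (size [:: (table_move w (mem0 E, None) 0).1] <= m)%N by rewrite /= m1.
  exact: median_alg_correct eps0 e0 e_eps (f_ge1 s1) (f_grid s1) maj.
by move=> w; apply: majority_correct_fail_le; rewrite /= m1.
Qed.

End UnionBound.

Lemma bernoulli_ineq (R : realFieldType) (x : R) i : 0 <= x -> 1 + i%:R * x <= (1 + x) ^+ i.
Proof.
move=> x0; elim: i => [|i IH]; first by rewrite mul0r addr0 expr0.
rewrite exprS -natr1 mulrDl mul1r.
have ix0 : 0 <= i%:R * x by apply: mulr_ge0.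
apply: (le_trans (y := (1 + x) * (1 + i%:R * x))); first nra.
by apply: ler_wpM2l => //; lra.
Qed.

Lemma natr_le_exp_grid (R : realFieldType) (e : R) (q t a : nat) :
  0 <= e -> 1 <= q%:R * e -> (a < 2 ^ t)%N -> a%:R <= (1 + e) ^+ (q * t).
Proof.
move=> e0 qe a_lt; rewrite exprM; apply: (le_trans (y := 2 ^+ t)).
  by rewrite -natrX ler_nat ltnW.
apply: lerXn2r; rewrite ?nnegrE; [lra | | ].
  by apply: exprn_ge0; lra.
by apply: le_trans (bernoulli_ineq _ e0); lra.
Qed.

Section Sizing.
Variable R : realType.

Definition grid_size (eps : R) (alpha : nat) : nat :=
  ((Num.truncn (3 / eps)).+1 * (trunc_log 2 alpha).+1).+1.

Lemma grid_size_cover (eps x : R) (alpha : nat) : 0 < eps -> 1 <= x <= alpha%:R ->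
  (1 + eps / 3) * x <= (1 + eps / 3) ^+ grid_size eps alpha.
Proof.
move=> eps0 /andP[x1 xa]; rewrite exprS; apply: ler_wpM2l; first lra.
apply: le_trans xa _; apply: natr_le_exp_grid; [lra | | exact: trunc_log_ltn].
have := truncnS_gt (3 / eps); rewrite ltr_pdivrMr // => q_gt.
by rewrite mulrA ler_pdivlMr //; lra.
Qed.

(* For [m = 1] the budget [ln m] vanishes; that case avoids the union bound over count
   vectors altogether (see [median_alg_robust_success1]). *)
Definition stream_bits (m : nat) : nat := if (m <= 1)%N then 0 else (trunc_log 2 m).+1.

Definition conf_bits (delta : R) : nat := (trunc_log 2 (Num.truncn (1 / delta))).+1.

Definition num_copies (N m : nat) (delta : R) : nat :=
  5 * (N * stream_bits m + conf_bits delta).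

Lemma succn_exp_le_stream_bits (m N : nat) :
  m != 1%N -> (m.+1 ^ N <= 2 ^ (N * stream_bits m))%N.
Proof.
rewrite /stream_bits; case: (leqP m 1) => [m1 m_ne1|m2 _].
  by case: m m1 m_ne1 => [|[|m]] // _ _; rewrite exp1n muln0.
rewrite mulnC expnM; have [->|N0] := posnP N; first by rewrite !expn0.
by rewrite leq_exp2r // trunc_log_ltn.
Qed.

Lemma inv_le_exp_conf_bits (delta : R) : 0 < delta -> 1 / delta <= 2 ^+ conf_bits delta.
Proof.
move=> delta0; apply: (le_trans (ltW (truncnS_gt (1 / delta)))).
by rewrite -natrX ler_nat; apply: trunc_log_ltn.
Qed.

Lemma num_copies_fail_le (N m U : nat) (delta : R) : 0 < delta ->
  (U <= 2 ^ (N * stream_bits m))%N -> U%:R * (13 / 20) ^+ num_copies N m delta <= delta.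
Proof.
move=> delta0 U_le; set c := (N * stream_bits m)%N; set b := conf_bits delta.
have half_b : (1 / 2) ^+ b <= delta.
  have := inv_le_exp_conf_bits delta0; rewrite -/b ler_pdivrMr // => hb.
  by rewrite expr_div_n expr1n ler_pdivrMr ?exprn_gt0 // mulrC.
apply: le_trans half_b; apply: (le_trans (y := 2 ^+ c * (1 / 2) ^+ (c + b))).
  apply: ler_pM; rewrite ?ler0n ?exprn_ge0 //; first by rewrite -natrX ler_nat.
  by rewrite /num_copies exprM; apply: lerXn2r; rewrite ?nnegrE ?exprn_ge0 //; lra.
by rewrite exprD mulrA -exprMn (_ : 2 * (1 / 2) = 1 :> R) ?expr1n ?mul1r //; lra.
Qed.

Lemma ln2_gt0 : 0 < ln (2 : R).
Proof. by apply: ln_gt0; lra. Qed.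

Lemma trunc_log2_ln (p : nat) : (2 <= p)%N ->
  (trunc_log 2 p).+1%:R * ln (2 : R) <= 2 * ln (p%:R : R).
Proof.
move=> p2; have p0 : (0 : R) < p%:R by rewrite ltr0n; lia.
have low : (trunc_log 2 p)%:R * ln (2 : R) <= ln (p%:R : R).
  rewrite mulr_natl -lnXn; last lra.
  rewrite ler_ln ?posrE ?exprn_gt0 // -natrX ler_nat.
  by apply: trunc_logP => //; lia.
have : ln (2 : R) <= ln (p%:R : R) by rewrite ler_ln ?posrE // (ler_nat R 2 p).
by rewrite -natr1 mulrDl mul1r; lra.
Qed.

Lemma conf_bits_ln (delta : R) : 0 < delta < 1 / 10 ->
  (conf_bits delta)%:R * ln 2 <= 2 * ln (1 / delta).
Proof.
move=> /andP[delta0 delta1]; have big : 10 < 1 / delta by rewrite ltr_pdivlMr //; lra.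
have t2 : (2 <= Num.truncn (1 / delta))%N by rewrite truncn_ge_nat; lra.
apply: le_trans (trunc_log2_ln t2) _; rewrite ler_pM2l // ler_ln ?posrE ?truncn_le; try lra.
by rewrite ltr0n; lia.
Qed.

Lemma stream_bits_ln (m : nat) : (stream_bits m)%:R * ln 2 <= 2 * ln (m%:R : R).
Proof.
rewrite /stream_bits; case: leqP => [m1|m2]; last exact: trunc_log2_ln.
rewrite mul0r; case: m m1 => [|m] _; first by rewrite ln0 // mulr0.
by apply: mulr_ge0 => //; apply: ln_ge0; rewrite ler1n.
Qed.

Lemma grid_size_ln (eps : R) (alpha : nat) : 0 < eps < 1 -> (2 <= alpha)%N ->
  (grid_size eps alpha).+2%:R * ln 2 <= 11 * (ln alpha%:R / eps).
Proof.
move=> /andP[eps0 eps1] alpha2; have l2 := ln2_gt0.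
have ln_alpha : ln 2 <= ln (alpha%:R : R).
  by rewrite ler_ln ?posrE ?ltr0n ?(ler_nat R 2 alpha); lia.
have q_le : (Num.truncn (3 / eps)).+1%:R <= 4 / eps.
  have t_le : (Num.truncn (3 / eps))%:R <= 3 / eps.
    by rewrite truncn_le; apply: divr_ge0; lra.
  have inv_ge1 : 1 <= 1 / eps by rewrite ler_pdivlMr //; lra.
  have -> : 4 / eps = 3 / eps + 1 / eps by rewrite -mulrDl; congr (_ / _); lra.
  by rewrite -natr1; apply: lerD.
have Z_ge : ln (alpha%:R : R) <= ln alpha%:R / eps.
  by rewrite ler_pdivlMr //; apply: ler_piMr; lra.
rewrite /grid_size -addn3 natrD natrM mulrDl -mulrA.
apply: (le_trans (y := 4 / eps * (2 * ln alpha%:R) + 3 * (ln alpha%:R / eps))); last first.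
  have -> : 4 / eps * (2 * ln alpha%:R) = 8 * (ln (alpha%:R : R) / eps) by ring.
  lra.
apply: lerD; last by apply: ler_wpM2l; [exact: ler0n | exact: le_trans ln_alpha Z_ge].
apply: ler_pM; [exact: ler0n | apply: mulr_ge0; [exact: ler0n | lra] | exact: q_le |].
exact: trunc_log2_ln.
Qed.

Lemma num_copies_le (k m alpha : nat) (eps delta : R) :
  0 < eps < 1 -> 0 < delta < 1 / 10 -> (2 <= alpha)%N ->
  (num_copies (2 ^ k * (grid_size eps alpha).+2) m delta)%:R <=
    (110 / ln 2 ^+ 2 + 10 / ln 2) *
    (2 ^+ k * (ln alpha%:R / eps) * ln m%:R + ln (1 / delta)).
Proof.
move=> eps01 delta01 alpha2; have l2 := ln2_gt0; have /andP[eps0 _] := eps01.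
have /andP[delta0 delta1] := delta01.
have lm0 : 0 <= ln (m%:R : R).
  by case: m => [|m]; [rewrite ln0 | apply: ln_ge0; rewrite ler1n].
set l := ln (2 : R); set Z := ln alpha%:R / eps; set X := 2 ^+ k * Z * ln (m%:R : R).
set Y := ln (1 / delta); set N := (2 ^ k * (grid_size eps alpha).+2)%N.
have Z0 : 0 <= Z by apply: divr_ge0; [apply: ln_ge0; rewrite ler1n; lia | lra].
have X0 : 0 <= X by apply: mulr_ge0 => //; apply: mulr_ge0 => //; apply: exprn_ge0.
have Y0 : 0 <= Y by apply: ln_ge0; rewrite ler_pdivlMr //; lra.
have stream : (N * stream_bits m)%:R <= 22 * X / l ^+ 2.
  rewrite ler_pdivlMr ?exprn_gt0 // natrM /N natrM natrX expr2.
  have -> : 22 * X = 2 ^+ k * ((11 * Z) * (2 * ln (m%:R : R))) by rewrite /X; ring.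
  have -> : 2 ^+ k * (grid_size eps alpha).+2%:R * (stream_bits m)%:R * (l * l) =
      2 ^+ k * (((grid_size eps alpha).+2%:R * l) * ((stream_bits m)%:R * l)) by ring.
  apply: ler_wpM2l; first exact: exprn_ge0.
  have l0 : 0 <= l := ltW l2.
  apply: ler_pM; [exact: mulr_ge0 | exact: mulr_ge0 | exact: grid_size_ln |].
  exact: stream_bits_ln.
have conf : (conf_bits delta)%:R <= 2 * Y / l.
  by rewrite ler_pdivlMr //; exact: conf_bits_ln.
have -> : (110 / l ^+ 2 + 10 / l) * (X + Y) =
    110 * (X / l ^+ 2) + 10 * (Y / l) + (110 * (Y / l ^+ 2) + 10 * (X / l)) by ring.
have rest : 0 <= 110 * (Y / l ^+ 2) + 10 * (X / l).
  have l0 : 0 <= l := ltW l2.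
  have dY : 0 <= Y / l ^+ 2 by apply: divr_ge0 => //; apply: exprn_ge0.
  have dX : 0 <= X / l by apply: divr_ge0.
  by apply: addr_ge0; apply: mulr_ge0.
rewrite /num_copies natrM natrD.
rewrite -mulrA in stream; rewrite -mulrA in conf; lra.
Qed.

End Sizing.

Lemma median_alg_robust_correct (R : realType) (n k m : nat) (A : salg R n) (T L : nat)
    (f : {ffun 'I_n -> int} -> R) (e eps delta : R) :
  is_dist (seed_dist A) -> order_invariant m A -> oblivious_correct m f e (1 / 10) A ->
  (forall s, (size s <= m)%N -> 1 <= f (freq s)) ->
  (forall s, (size s <= m)%N -> (1 + e) * f (freq s) <= (1 + e) ^+ L) ->
  0 < eps -> 0 <= e -> (1 + e) ^+ 2 <= 1 + eps ->
  (13 / 20) ^+ T <= delta ->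
  (m != 1%N -> (m.+1 ^ #|adv_view k L|)%:R * (13 / 20) ^+ T <= delta) ->
  robust_correct m k f eps delta (median_alg A T L e).
Proof.
move=> A_dist A_inv A_correct f_ge1 f_grid eps0 e0 e_eps fail1 fail E E_valid.
have [m1|m_ne1] := eqVneq m 1%N.
  apply: le_trans (median_alg_robust_success1 T A_dist A_correct f_ge1 f_grid eps0 e0 e_eps
    E_valid m1); lra.
apply: le_trans (median_alg_robust_success T A_dist A_inv A_correct f_ge1 f_grid eps0 e0 e_eps
  E_valid).
by have := fail m_ne1; lra.
Qed.

Lemma card_adv_view (k L : nat) : #|adv_view k L| = (2 ^ k * L.+2)%N.
Proof. by rewrite card_prod card_tuple card_bool card_option card_ord. Qed.

Theorem theorem6p4 (R : realType) :
  exists C : R,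
  forall (n m alpha : nat) (f : {ffun 'I_n -> int} -> R),
    (2 <= alpha)%N ->
    (forall v, f v = 0 \/ (1 <= f v <= alpha%:R)) ->
  forall (A : R -> R -> salg R n) (M : R -> R -> nat),
    (forall eps delta : R, 0 < eps < 1 -> 0 < delta < 1 ->
       [/\ is_dist (seed_dist (A eps delta)),
           uses_space (A eps delta) (M eps delta),
           order_invariant m (A eps delta)
         & oblivious_correct m f eps delta (A eps delta)]) ->
  forall (eps delta : R) (k : nat),
    0 < eps < 1 -> 0 < delta < 1 / 10 ->
    exists (B : salg R n) (S : nat),
      [/\ is_dist (seed_dist B),
          uses_space B S,
          S%:R <= C * (M (eps / 3) (1 / 10))%:R *
                  (2 ^+ k * (ln alpha%:R / eps) * ln m%:R + ln (1 / delta))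
        & robust_correct m k f eps delta B].
Proof.
exists (110 / ln 2 ^+ 2 + 10 / ln 2).
move=> n m alpha f alpha2 f_range A M A_spec eps delta k eps01 delta01.
have /andP[eps0 eps1] := eps01; have /andP[delta0 delta1] := delta01.
have [||A_dist A_space A_inv A_correct] := A_spec (eps / 3) (1 / 10).
1,2: by apply/andP; split; lra.
set L := grid_size eps alpha; set T := num_copies (2 ^ k * L.+2) m delta.
have f_ge1 s : (size s <= m)%N -> 1 <= f (freq s).
  move=> sm; apply: oblivious_correct_ge1 sm A_correct; first lra.
  by case: (f_range (freq s)) => [->|/andP[]]; [left | right].
exists (median_alg (A (eps / 3) (1 / 10)) T L (eps / 3)), (M (eps / 3) (1 / 10) * T)%N; split.
- exact: median_alg_dist.
- exact: median_alg_space.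
- rewrite natrM -[leRHS]mulrA [leRHS]mulrCA; apply: ler_wpM2l; first exact: ler0n.
  exact: num_copies_le.
- apply: median_alg_robust_correct => //.
  + move=> s sm; apply: grid_size_cover => //.
    by case: (f_range (freq s)) => // f0; have := f_ge1 s sm; rewrite f0; lra.
  + lra.
  + nra.
  + have := num_copies_fail_le (N := 2 ^ k * L.+2) (m := m) (U := 1) delta0 (expn_gt0 _ _).
    by rewrite mulr1n mul1r.
  + move=> m_ne1; apply: num_copies_fail_le => //.
    by rewrite card_adv_view succn_exp_le_stream_bits.
Qed.
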